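(* Let $q$ be a prime power, $8\le n\le q$, $\alpha_1,\dots,\alpha_n\in\mathbb{F}_q$ distinct, $u_1,\dots,u_n\in\mathbb{F}_q^*$, and $H\in\mathbb{F}_q^{7\times n}$ with $H_{ab}=u_b\alpha_b^{a-1}$ (so $\ker H$ has distance $8$). Then the number of $e\in\mathbb{F}_q^n$ with $|e|=4$ for which there exists $e'\in\mathbb{F}_q^n$, $e'\ne e$, $|e'|\le 4$, $He'=He$, is at most $$\frac{(n-4)(n-5)(n-6)(n-7)}{24(q-1)^3}\cdot(q-1)^4\binom{n}{4}.$$
   Context: $|e|$ denotes the Hamming weight of $e\in\mathbb{F}_q^n$. *)

From HB Require Import structures.
From mathcomp Require Import all_boot all_order all_algebra all_field.
Set Implicit Arguments. Unset Strict Implicit. Unset Printing Implicit Defensive.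
Import Order.TTheory GRing.Theory Num.Theory.
Local Open Scope ring_scope.

Definition hwt (F : finFieldType) (n : nat) (e : 'cV[F]_n) : nat :=
  #|[set i : 'I_n | e i ord0 != 0]|.

(* Parity-check matrix of a generalized Reed-Solomon code with 7 rows:
   H_{ab} = u_b alpha_b^(a-1), with rows indexed from 0 (so a-1 = row index). *)
Definition grsH (F : finFieldType) (n : nat) (alpha u : 'I_n -> F) : 'M[F]_(7, n) :=
  \matrix_(a < 7, b < n) (u b * alpha b ^+ a).

From HB Require Import structures.
From mathcomp Require Import all_boot all_order all_algebra all_field.
From mathcomp Require Import ring zify.
Set Implicit Arguments. Unset Strict Implicit. Unset Printing Implicit Defensive.
Import Order.TTheory GRing.Theory Num.Theory.
Local Open Scope ring_scope.

(* The kernel of H has minimum distance 8: a kernel vector c satisfies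
   sum_b u_b c_b p(alpha_b) = 0 for every polynomial p of degree < 7, and if c
   is supported on at most 7 points, taking p vanishing at all but one of them
   forces c = 0.  Hence a weight-4 vector e sharing its syndrome with some other
   e' of weight at most 4 has a support S disjoint from the support T of e', and
   |T| = 4.  For fixed S and T such an e is determined by a single nonzero
   coordinate, because the difference of two such pairs is a kernel vector
   supported on (S u T) minus a point.  There are C(n,4) choices of S,
   C(n-4,4) of T and q-1 of the coordinate. *)

Lemma card_bigcup_le (I T : finType) (P : pred I) (A : I -> {set T}) :
  (#|\bigcup_(i | P i) A i| <= \sum_(i | P i) #|A i|)%N.
Proof.
apply: (big_ind2 (fun (X : {set T}) k => #|X| <= k)%N) => [|X k Y m leXk leYm|//].
  by rewrite cards0.
exact: leq_trans (leq_card_setU X Y).1 (leq_add leXk leYm).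
Qed.

Lemma bin4_ffact m : ('C(m, 4) * 24 = m * (m - 1) * (m - 2) * (m - 3))%N.
Proof.
by rewrite (bin_ffact m 4) !ffactnS ffactn0 !mulnA muln1; congr (_ * _ * _ * _); lia.
Qed.

Section Support.
Variables (F : finFieldType) (n : nat).

Definition supp (e : 'cV[F]_n) : {set 'I_n} := [set i | e i ord0 != 0].

Lemma hwtE (e : 'cV[F]_n) : hwt e = #|supp e|.
Proof. by []. Qed.

Lemma memNsupp (e : 'cV[F]_n) k : k \notin supp e -> e k ord0 = 0.
Proof. by rewrite inE negbK => /eqP. Qed.

Lemma suppB (e e' : 'cV[F]_n) : supp (e - e') \subset supp e :|: supp e'.
Proof.
apply/subsetP => k; rewrite !inE !mxE; apply: contraR.
by rewrite negb_or !negbK => /andP[/eqP -> /eqP ->]; rewrite subrr.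
Qed.

End Support.

Section GRSCollisions.
Variables (F : finFieldType) (n : nat) (alpha u : 'I_n -> F).
Hypotheses (alpha_inj : injective alpha) (u_neq0 : forall i, u i != 0).
Local Notation H := (grsH alpha u).

Lemma grsH_kernel_horner (c : 'cV[F]_n) (p : {poly F}) :
  H *m c = 0 -> (size p <= 7)%N -> \sum_b u b * c b ord0 * p.[alpha b] = 0.
Proof.
move=> Hc sz_p.
under eq_bigr => b _ do rewrite (horner_coef_wide _ sz_p) big_distrr.
rewrite exchange_big /=; apply: big1 => i _.
have := congr1 (fun M : 'M[F]_(7, 1) => M i ord0) Hc; rewrite !mxE => Hci.
rewrite (eq_bigr (fun b => p`_i * (H i b * c b ord0))) -?big_distrr /= ?Hci ?mulr0 //.
by move=> b _; rewrite mxE; ring.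
Qed.

Lemma grsH_kernel_eq0 (c : 'cV[F]_n) :
  H *m c = 0 -> (#|supp c| <= 7)%N -> c = 0.
Proof.
move=> Hc card_c; apply/matrixP => j k; rewrite (ord1 k) mxE.
apply/eqP/contraT => cj0.
have jS : j \in supp c by rewrite inE.
pose p := \prod_(x <- [seq alpha b | b <- enum (supp c :\ j)]) ('X - x%:P).
have sz_p : (size p <= 7)%N.
  by rewrite size_prod_XsubC size_map -cardE; move: card_c; rewrite (cardsD1 j) jS.
have pj : p.[alpha j] != 0.
  rewrite -/(root p _) root_prod_XsubC; apply/mapP => -[b].
  by rewrite mem_enum !inE => /andP[bj _] /alpha_inj jb; rewrite jb eqxx in bj.
have := grsH_kernel_horner Hc sz_p; rewrite (bigD1 j) //= big1 ?addr0.
  by move=> /eqP; rewrite !mulf_eq0 /= (negbTE (u_neq0 j)) (negbTE cj0) (negbTE pj).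
move=> b bj; have [bS|/memNsupp ->] := boolP (b \in supp c); last by rewrite mulr0 mul0r.
suff /rootP -> : root p (alpha b) by rewrite mulr0.
by rewrite root_prod_XsubC map_f // mem_enum in_setD1 bj.
Qed.

Lemma syndrome_collision (e e' : 'cV[F]_n) :
  (hwt e + hwt e' <= 8)%N -> e' != e -> H *m e' = H *m e ->
  [disjoint supp e & supp e'] /\ (hwt e + hwt e' = 8)%N.
Proof.
move=> wt_le8 ne HH; rewrite !hwtE in wt_le8 *.
have ge8 : (8 <= #|supp (e - e')|)%N.
  rewrite ltnNge; apply: contra ne => le7; rewrite eq_sym -subr_eq0.
  by apply/eqP/grsH_kernel_eq0; rewrite // mulmxBr HH subrr.
have U := leq_card_setU (supp e) (supp e').
have le_U := subset_leq_card (suppB e e').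
have eqU : #|supp e :|: supp e'| = (#|supp e| + #|supp e'|)%N.
  by apply/eqP; rewrite eqn_leq U.1 (leq_trans wt_le8 (leq_trans ge8 le_U)).
by split; [rewrite -U.2 eqU | lia].
Qed.

Definition collision_class (S T : {set 'I_n}) : {set 'cV[F]_n} :=
  [set e | (supp e == S) && [exists e', (supp e' == T) && (H *m e' == H *m e)]].

Lemma collision_class_coord_inj (S T : {set 'I_n}) i0 :
  [disjoint S & T] -> (#|S :|: T| <= 8)%N -> i0 \in S ->
  {in collision_class S T &, injective (fun e : 'cV[F]_n => e i0 ord0)}.
Proof.
move=> dST card_ST i0S e1 e2.
rewrite !inE => /andP[/eqP s1 /existsP[e1' /andP[/eqP s1' /eqP H1]]].
move=> /andP[/eqP s2 /existsP[e2' /andP[/eqP s2' /eqP H2]]] /= eq_i0.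
have outS k : k \notin S -> e1 k ord0 = e2 k ord0.
  by move=> kS; rewrite !memNsupp ?s1 ?s2.
have i0T : i0 \notin T by rewrite (disjointFr dST i0S).
set d := (e1 - e1') - (e2 - e2').
have Hd : H *m d = 0 by rewrite !mulmxBr H1 H2 !subrr.
have supp_d : supp d \subset (S :|: T) :\ i0.
  have d_i0 : d i0 ord0 = 0.
    rewrite !mxE (memNsupp (e := e1')) ?(memNsupp (e := e2')) ?s1' ?s2' //.
    by rewrite eq_i0 !subr0 subrr.
  rewrite subsetD1 inE d_i0 eqxx andbT.
  apply: subset_trans (suppB _ _) _; rewrite subUset.
  by apply/andP; split; apply: subset_trans (suppB _ _) _; rewrite ?s1 ?s2 ?s1' ?s2'.
have d0 : d = 0.
  apply: (grsH_kernel_eq0 Hd); apply: leq_trans (subset_leq_card supp_d) _.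
  by move: card_ST; rewrite (cardsD1 i0) in_setU i0S.
apply/matrixP => k l; rewrite (ord1 l).
have [kS|/outS //] := boolP (k \in S).
have kT : k \notin T by rewrite (disjointFr dST kS).
move/matrixP/(_ k ord0): d0; rewrite /d !mxE.
rewrite (memNsupp (e := e1')) ?(memNsupp (e := e2')) ?s1' ?s2' // !subr0.
by move/eqP; rewrite subr_eq0 => /eqP.
Qed.

Lemma card_collision_class (S T : {set 'I_n}) :
  [disjoint S & T] -> (#|S :|: T| <= 8)%N -> S != set0 ->
  (#|collision_class S T| <= #|F| - 1)%N.
Proof.
move=> dST card_ST /set0Pn[i0 i0S].
rewrite -(card_in_imset (collision_class_coord_inj dST card_ST i0S)).
rewrite subn1 -(cardsC1 (0 : F)).
apply/subset_leq_card/subsetP => _ /imsetP[e + ->]; rewrite !inE.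
by case/andP => /eqP s_e _; rewrite -s_e inE in i0S.
Qed.

Definition weight4_collisions : {set 'cV[F]_n} :=
  [set e | (hwt e == 4%N) &&
     [exists e', [&& e' != e, (hwt e' <= 4)%N & H *m e' == H *m e]]].

Lemma weight4_collisions_cover :
  weight4_collisions \subset
    \bigcup_(S in [set S : {set 'I_n} | #|S| == 4%N])
      \bigcup_(T in [set T : {set 'I_n} | (T \subset ~: S) && (#|T| == 4%N)])
        collision_class S T.
Proof.
apply/subsetP => e; rewrite inE => /andP[/eqP wt_e /existsP[e' /and3P[ne wt_e' /eqP HH]]].
have [dj wt8] := syndrome_collision (leq_add (eq_leq wt_e) wt_e') ne HH.
apply/bigcupP; exists (supp e); first by rewrite inE -hwtE wt_e.
apply/bigcupP; exists (supp e').
  by rewrite inE -hwtE -disjoints_subset disjoint_sym dj /=; lia.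
by rewrite inE eqxx /=; apply/existsP; exists e'; rewrite HH !eqxx.
Qed.

Lemma card_weight4_collisions :
  (#|weight4_collisions| <= 'C(n, 4) * ('C(n - 4, 4) * (#|F| - 1)))%N.
Proof.
apply: leq_trans (subset_leq_card weight4_collisions_cover) _.
apply: leq_trans (@card_bigcup_le _ _ _ _) _.
rewrite -[in 'C(n, 4)](card_ord n) -card_draws -sum_nat_const; apply: leq_sum => S.
rewrite inE => /eqP card_S; apply: leq_trans (@card_bigcup_le _ _ _ _) _.
have -> : (n - 4 = #|~: S|)%N by rewrite cardsCs setCK card_ord card_S.
rewrite -cards_draws -sum_nat_const; apply: leq_sum => T.
rewrite inE => /andP[sub_T /eqP card_T].
have dST : [disjoint S & T] by rewrite disjoint_sym disjoints_subset.
apply: card_collision_class => //; last by rewrite -card_gt0 card_S.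
by rewrite (leq_trans (leq_card_setU S T).1) // card_S card_T.
Qed.

End GRSCollisions.

Theorem mainTheorem13 (F : finFieldType) (n : nat)
    (alpha u : 'I_n -> F)
    (Hn8 : (8 <= n)%N) (Hnq : (n <= #|F|)%N)
    (Halpha : injective alpha) (Hu : forall i, u i != 0) :
  let q := #|F| in
  let H := grsH alpha u in
  (#|[set e : 'cV[F]_n | (hwt e == 4%N) &&
       [exists e' : 'cV[F]_n, [&& e' != e, (hwt e' <= 4)%N & H *m e' == H *m e]]]|%:R
     : rat)
  <= ((n - 4) * (n - 5) * (n - 6) * (n - 7))%:R / (24 * (q - 1) ^ 3)%:R
       * ((q - 1) ^ 4 * 'C(n, 4))%:R.
Proof.
cbv zeta; set q := #|F|.
have q1_neq0 : (q - 1)%:R != 0 :> rat by rewrite pnatr_eq0 -lt0n subn_gt0; lia.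
have -> : ((n - 4) * (n - 5) * (n - 6) * (n - 7) = 'C(n - 4, 4) * 24)%N.
  by rewrite bin4_ffact -!subnDA.
have -> : ('C(n - 4, 4) * 24)%:R / (24 * (q - 1) ^ 3)%:R * ((q - 1) ^ 4 * 'C(n, 4))%:R
    = ('C(n, 4) * ('C(n - 4, 4) * (q - 1)))%:R :> rat.
  by rewrite !natrM ?natrX; field.
by rewrite ler_nat; exact: card_weight4_collisions.
Qed.
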